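(* Let $X$ be a quasi-Banach function space over $\mathbf{R}^d$ for which $X'\ne\{0\}$. If $\mathbf{1}_{\mathbf{R}^d}\in X$, then $M$ is not bounded from $X'$ to $X'$.
   Context: A quasi-Banach function space over $\mathbf{R}^d$ is a complete quasi-normed space $X\subseteq L^0(\mathbf{R}^d)$ with the ideal property (if $f\in X$, $|g|\le|f|$ then $g\in X$, $\|g\|_X\le\|f\|_X$) and the saturation property (every set of positive measure contains a subset $F$ of positive measure with $\mathbf{1}_F\in X$). Köthe dual: $X'=\{g:fg\in L^1(\mathbf{R}^d)\ \forall f\in X\}$ with $\|g\|_{X'}=\sup_{\|f\|_X=1}\int|fg|$. $M$ is the Hardy–Littlewood maximal operator over axis-parallel cubes. *)

From HB Require Import structures.
From mathcomp Require Import all_boot all_order all_algebra.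
From mathcomp Require Import all_classical all_reals all_analysis.
Set Implicit Arguments. Unset Strict Implicit. Unset Printing Implicit Defensive.
Import Order.TTheory GRing.Theory Num.Theory.
Import numFieldNormedType.Exports.
Local Open Scope classical_set_scope.
Local Open Scope ring_scope.

Definition Rd (R : realType) (d : nat) : measurableType _ :=
  g_sigma_algebraType (@open 'rV[R]_d).

Section defs.
Context {R : realType} {d : nat}.
Local Notation T := (Rd R d).

Definition cube (a : 'rV[R]_d) (l : R) : set T :=
  [set x : T | forall i : 'I_d, a ord0 i <= (x : 'rV[R]_d) ord0 i <= a ord0 i + l].

(* d-dimensional Lebesgue (outer) measure, defined by countable cube covers *)
Definition leb (A : set T) : \bar R :=
  ereal_inf [set S : \bar R | exists (a : nat -> 'rV[R]_d) (l : nat -> R),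
     (forall k, 0 < l k) /\ A `<=` \bigcup_k cube (a k) (l k) /\
     S = (\sum_(0 <= k <oo) ((l k) ^+ d)%:E)%E].

Definition ae (P : T -> Prop) : Prop :=
  exists N : set T, measurable N /\ leb N = 0%E /\ [set x | ~ P x] `<=` N.

Definition ae_zero (f : T -> R) : Prop := ae (fun x => f x = 0).

Definition int_abs (A : set T) (f : T -> R) : \bar R :=
  (\int[leb]_(x in A) (`|f x|)%:E)%E.

Definition indic (A : set T) : T -> R := fun x => if `[< A x >] then 1 else 0.

(* quasi-Banach function space over R^d: X is (a set of representatives of)
   a subspace of L^0, nX its quasi-norm *)
Definition is_QBFS (X : set (T -> R)) (nX : (T -> R) -> R) : Prop :=
      (forall f, X f -> measurable_fun setT f) /\
      X (fun _ => 0) /\ (forall f g, X f -> X g -> X (fun x => f x + g x)) /\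
      (forall (c : R) f, X f -> X (fun x => c * f x)) /\
      (forall f, X f -> 0 <= nX f) /\
      (forall f, X f -> (nX f = 0 <-> ae_zero f)) /\
      (forall (c : R) f, X f -> nX (fun x => c * f x) = `|c| * nX f) /\
      (exists K : R, 1 <= K /\ forall f g, X f -> X g ->
          nX (fun x => f x + g x) <= K * (nX f + nX g)) /\
      (forall u : nat -> T -> R, (forall n, X (u n)) ->
         (forall e : R, 0 < e -> exists N : nat, forall m n : nat,
            (N <= m)%N -> (N <= n)%N -> nX (fun x => u m x - u n x) < e) ->
         exists f, X f /\
           (fun n => nX (fun x => u n x - f x)) @ \oo --> (0 : R)) /\
      (forall f (g : T -> R), X f -> measurable_fun setT g ->
         ae (fun x => `|g x| <= `|f x|) -> X g /\ nX g <= nX f) /\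
      (forall E : set T, measurable E -> (0 < leb E)%E ->
         exists F : set T, [/\ measurable F, F `<=` E, (0 < leb F)%E & X (indic F)]).

Definition kothe (X : set (T -> R)) : set (T -> R) :=
  [set g : T -> R | measurable_fun setT g /\
     forall f, X f -> (int_abs setT (fun x => (f x * g x)%R) < +oo)%E].

Definition kothe_norm (X : set (T -> R)) (nX : (T -> R) -> R) (g : T -> R) : \bar R :=
  ereal_sup [set int_abs setT (fun x => (f x * g x)%R) | f in [set f | X f /\ nX f = 1]].

Definition HLmax (f : T -> R) (x : T) : \bar R :=
  ereal_sup [set S : \bar R | exists (a : 'rV[R]_d) (l : R),
     [/\ 0 < l, cube a l x & S = (((l ^+ d)^-1)%:E * int_abs (cube a l) f)%E]].

Definition HLmax_bounded (Y : set (T -> R)) (nY : (T -> R) -> \bar R) : Prop :=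
  exists C : R, 0 <= C /\ forall g, Y g ->
    exists h, [/\ Y h, ae (fun x => HLmax g x = (h x)%:E) & (nY h <= C%:E * nY g)%E].
End defs.

(* If M were bounded on X', then for g in X' not a.e. zero, Mg would agree
   a.e. with some h in X', and pairing h with 1 in X makes h integrable.  But
   |g| has integral c > 0 over some cube Q of side l.  The cube Q_n of side
   2^n l placed 3 2^n l away from Q along one axis lies, together with Q, in a
   cube of side 4 2^n l, so Mg >= c (4 2^n l)^-d on Q_n, while |Q_n| >=
   2^nd |Q|.  The Q_n are pairwise disjoint, so each adds at least
   c |Q| / (4 l)^d to the integral of |h|, which is therefore infinite. *)

From HB Require Import structures.
From mathcomp Require Import all_boot all_order all_algebra.
From mathcomp Require Import all_classical all_reals all_analysis.
From mathcomp Require Import measurable_realfun lra.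
Set Implicit Arguments. Unset Strict Implicit. Unset Printing Implicit Defensive.
Import Order.TTheory GRing.Theory Num.Theory archimedean.
Import numFieldNormedType.Exports.
Local Open Scope classical_set_scope.
Local Open Scope ring_scope.

Lemma nneseries_pair (R : realType) (e : {bij [set: nat] >-> [set: nat * nat]})
    (a : nat -> nat -> \bar R) : (forall i j, 0 <= a i j)%E ->
  (\sum_(k <oo) a (e k).1 (e k).2 = \sum_(i <oo) \sum_(j <oo) a i j)%E.
Proof.
move=> a0; rewrite nneseries_esumT; last by move=> k; exact: a0.
rewrite -(reindex_esum [set: nat] [set: nat * nat] e (fun p => a p.1 p.2)) //.
have -> : [set: nat * nat] = [set: nat] `*`` fun=> [set: nat] by apply/seteqP.
rewrite -esum_esum // nneseries_esumT; last by move=> i; exact: nneseries_ge0.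
by apply: eq_esum => i _; rewrite nneseries_esumT.
Qed.

Lemma ereal_gt0_ge_fin (R : realType) (x : \bar R) :
  (0 < x)%E -> exists2 r : R, 0 < r & (r%:E <= x)%E.
Proof.
case: x => [r r0||//]; first by exists r; rewrite -?lte_fin.
by exists 1 => //; exact: leey.
Qed.

Lemma natmul_le_eq_pinfty (R : realType) (r : R) (x : \bar R) :
  0 < r -> (forall m, ((r *+ m)%:E <= x)%E) -> x = +oo%E.
Proof.
case: x => [x||] r0 rx //; last by have := rx 0%N; rewrite leeNy_eq.
exfalso; have := rx (Num.trunc (x / r)).+1; rewrite lee_fin -mulr_natr mulrC.
have := truncnS_gt (x / r); rewrite ltr_pdivrMr //.
lra.
Qed.

Section lebesgue_outer_measure.
Context {R : realType} {d : nat}.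
Local Notation T := (Rd R d).
Local Open Scope ereal_scope.

Lemma leb_ge0 (A : set T) : 0 <= leb A.
Proof.
apply: le_ereal_inf_tmp => _ [a [l [l0 [_ ->]]]].
by apply: nneseries_ge0 => n _; rewrite lee_fin exprn_ge0// ltW.
Qed.

Lemma le_leb (A B : set T) : A `<=` B -> leb A <= leb B.
Proof.
move=> AB; apply: le_ereal_inf => _ [a [l [l0 [Bc ->]]]].
by exists a, l; split => //; split => //; apply: subset_trans Bc.
Qed.

Lemma leb_cover_le (A : set T) (e : R) : leb A < +oo -> (0 < e)%R ->
  exists (a : nat -> 'rV[R]_d) (l : nat -> R),
    [/\ forall k, (0 < l k)%R, A `<=` \bigcup_k cube (a k) (l k) &
        \sum_(k <oo) ((l k) ^+ d)%:E <= leb A + e%:E].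
Proof.
move=> Aoo e0; have Afin : leb A \is a fin_num by rewrite ge0_fin_numE ?leb_ge0.
have [_ [a [l [l0 [Ac ->]]]] le] := lb_ereal_inf_adherent e0 Afin.
by exists a, l; split => //; exact: ltW.
Qed.

Lemma leb_sigma_subadditive (A : nat -> set T) :
  leb (\bigcup_n A n) <= \sum_(n <oo) leb (A n).
Proof.
have [[i ioo]|] := pselect (exists i, leb (A i) = +oo).
  rewrite (eseries_pinfty _ _ ioo) ?leey// => n _.
  by rewrite gt_eqF// (lt_le_trans _ (leb_ge0 _)).
rewrite -forallNE => Aoo; apply/lee_addgt0Pr => e e0.
rewrite (le_trans _ (epsilon_trick _ _ _))//; last 2 first.
- by move=> n; exact: leb_ge0.
- exact: ltW.
pose P n (al : (nat -> 'rV[R]_d) * (nat -> R)) :=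
  [/\ forall k, (0 < al.2 k)%R, A n `<=` \bigcup_k cube (al.1 k) (al.2 k) &
       \sum_(k <oo) ((al.2 k) ^+ d)%:E <= leb (A n) + (e / (2 ^ n.+1)%:R)%:E].
have [G PG] : {G : nat -> (nat -> 'rV[R]_d) * (nat -> R) & forall n, P n (G n)}.
  apply: (@choice _ _ P) => n.
  have Anoo : leb (A n) < +oo by rewrite ltey; exact/eqP/Aoo.
  have en : (0 < e / (2 ^ n.+1)%:R)%R by rewrite divr_gt0.
  have [a [l Hal]] := leb_cover_le Anoo en.
  by exists (a, l).
have /card_esym/ppcard_eqP[f] := card_nat2.
pose a k := (G (f k).1).1 (f k).2; pose l k := (G (f k).1).2 (f k).2.
apply: (@le_trans _ _ (\sum_(k <oo) ((l k) ^+ d)%:E)).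
  apply: ereal_inf_lbound; exists a, l; split => [k|].
    by have [+ _ _] := PG (f k).1; apply.
  split => // t [i _ Ait]; have [_ /(_ t Ait)[j _ Hj] _] := PG i.
  by exists (f^-1%FUN (i, j)) => //; rewrite /a /l invK ?inE.
have G_ge0 i j : 0 <= (((G i).2 j) ^+ d)%:E.
  by rewrite lee_fin exprn_ge0// ltW//; have [+ _ _] := PG i; apply.
rewrite (@nneseries_pair _ f (fun i j => (((G i).2 j) ^+ d)%:E)) //.
apply: lee_nneseries => [n _ _|n _]; first exact: nneseries_ge0.
by have [] := PG n.
Qed.

Lemma leb_setD_null (A N : set T) : leb N = 0 -> leb (A `\` N) = leb A.
Proof.
move=> N0; apply/eqP; rewrite eq_le le_leb => [|x []//].
pose B n := if n is 0%N then A `\` N else N.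
apply: (@le_trans _ _ (leb (\bigcup_n B n))).
  by apply: le_leb => x Ax; have [Nx|NNx] := pselect (N x); [exists 1%N|exists 0%N].
apply: (le_trans (leb_sigma_subadditive B)).
rewrite (nneseries_split 0 1); last by move=> k _; exact: leb_ge0.
by rewrite add0n big_nat1 eseries0 ?adde0// => -[|k].
Qed.

Lemma leb_homothety_le (A B : set T) (b : 'rV[R]_d) (t : R) : (0 < t)%R ->
  (forall x : T, A x -> B ((b + t *: (x : 'rV[R]_d))%R : T)) ->
  (t ^+ d)%:E * leb A <= leb B.
Proof.
move=> t0 AB; apply: le_ereal_inf_tmp => _ [a [l [l0 [Bc ->]]]].
have -> : \sum_(k <oo) ((l k) ^+ d)%:E =
    (t ^+ d)%:E * \sum_(k <oo) (((l k / t) ^+ d)%:E).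
  rewrite -nneseriesZl => [|k _]; last by rewrite lee_fin exprn_ge0// divr_ge0// ltW.
  apply: eq_eseriesr => k _; rewrite -EFinM -exprMn mulrCA mulfV ?mulr1//.
  exact: lt0r_neq0.
apply: lee_wpmul2l; first by rewrite lee_fin exprn_ge0// ltW.
apply: ereal_inf_lbound; exists (fun k => t^-1 *: (a k - b))%R, (fun k => l k / t)%R.
split=> [k|]; first by rewrite divr_gt0.
split=> // x /AB /Bc[k _ Hk]; exists k => // i; move/andP: (Hk i); rewrite !mxE.
move=> [h1 h2]; rewrite (mulrC (l k)) -mulrDr -[x ord0 i](mulKf (lt0r_neq0 t0)).
by apply/andP; split; rewrite ler_wpM2l ?invr_ge0 ?(ltW t0)//; lra.
Qed.

End lebesgue_outer_measure.

Section cubes.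
Context {R : realType} {d : nat}.
Local Notation T := (Rd R d).

Lemma closed_cube (a : 'rV[R]_d) (l : R) : closed (cube a l : set 'rV[R]_d).
Proof.
have -> : (cube a l : set 'rV[R]_d) = \bigcap_(i in setT)
   ((fun x : 'rV[R]_d => x ord0 i) @^-1` [set r | a ord0 i <= r] `&`
    (fun x : 'rV[R]_d => x ord0 i) @^-1` [set r | r <= a ord0 i + l]).
  apply/seteqP; split => [x Hx i _|x Hx i]; first by have /andP[] := Hx i.
  by have [/= -> ->] := Hx i I.
apply: closed_bigI => i _; apply: closedI;
  apply: (proj1 (continuous_closedP _)); do ?exact: coord_continuous.
- exact: closed_ge.
- exact: closed_le.
Qed.

Lemma measurable_cube (a : 'rV[R]_d) (l : R) : measurable (cube a l : set T).
Proof.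
rewrite -[cube a l]setCK; apply: measurableC; apply: sub_sigma_algebra.
by rewrite /= -closedC setCK; exact: closed_cube.
Qed.

Lemma cube_sub (a : 'rV[R]_d) (l L : R) : l <= L -> cube a l `<=` cube a L.
Proof.
move=> lL x Hx i; have /andP[h1 h2] := Hx i.
by apply/andP; split => //; lra.
Qed.

End cubes.

Section integral_lower_bounds.
Context {R : realType} {d : nat}.
Local Notation T := (Rd R d).
Local Open Scope ereal_scope.
Import HBNNSimple.
(* For d = 0 every cube cover has infinite total volume, so leb set0 = +oo;
   any null set, e.g. the exceptional set of an a.e. statement, excludes this. *)
Hypothesis leb_set0 : leb (set0 : set T) = 0.

Lemma sintegral_eq0 (h : T -> R) : (forall x, h x = 0%R) -> sintegral leb h = 0.
Proof.
move=> h0; rewrite /sintegral fsbig1// => r _.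
have [->|r0] := eqVneq r 0%R; first by rewrite mul0e.
rewrite (_ : h @^-1` [set r] = set0) ?leb_set0 ?mule0//.
by apply/seteqP; split => x //=; rewrite h0 => /esym/eqP; rewrite (negbTE r0).
Qed.

Lemma sintegral_le_int_abs (D : set T) (f : T -> R) (h : {nnsfun T >-> R}) :
  (forall x, D x -> (h x <= `|f x|)%R) -> (forall x, ~ D x -> h x = 0%R) ->
  sintegral leb h <= int_abs D f.
Proof.
move=> hD hND; rewrite /int_abs /integral -[leLHS]sube0; apply: leeB.
  apply: ereal_sup_ubound; exists h => // x; rewrite funeposE /patch.
  case: ifPn => [/set_mem Dx|/negP NDx]; first by rewrite le_max lee_fin hD.
  by rewrite hND ?maxxx// => /mem_set.
apply: ub_ereal_sup => _ [k /= Hk <-]; rewrite sintegral_eq0// => x.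
apply/eqP; rewrite eq_le fun_ge0 andbT -lee_fin.
apply: (le_trans (Hk x)); rewrite funenegE /patch; case: ifPn => _.
  by rewrite ge_max lexx andbT -EFinN lee_fin oppr_le0 normr_ge0.
by rewrite oppe0 maxxx.
Qed.

Lemma le_sintegral_steps (h : {nnsfun T >-> R}) (m : nat) (v : nat -> R)
    (S : nat -> set T) :
  set_inj `I_m v -> (forall n, 0 <= v n)%R ->
  (forall n, (n < m)%N -> forall x, S n x -> h x = v n) ->
  \sum_(n < m) (v n)%:E * leb (S n) <= sintegral leb h.
Proof.
move=> vinj v0 hS; set V := v @` `I_m.
have finV : finite_set V by apply: finite_image; exact: finite_II.
have finRV : finite_set (range h `|` V).
  by rewrite finite_setU; split => //; exact: fimfunP.
rewrite /sintegral -(fsbig_widen (range h `|` V) setT) //; last first.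
  move=> r [_ /not_orP[Nr _]] /=; rewrite (_ : h @^-1` [set r] = set0) ?leb_set0 ?mule0//.
  by apply/seteqP; split => x //= hx; apply: Nr; exists x.
apply: (@le_trans _ _ (\sum_(r \in V) r%:E * leb (h @^-1` [set r]))); last first.
  apply: lee_fsum_nneg_subset => // [r|r]; rewrite !inE; first by right.
  move=> /andP[_]; rewrite inE => -[[x _ <-]|[n _ <-]];
    by apply: mule_ge0; [rewrite lee_fin ?v0|exact: leb_ge0].
rewrite fsbig_image // -fsbig_ord; apply: lee_sum => n _.
apply: lee_wpmul2l; first by rewrite lee_fin v0.
by apply: le_leb => x Sx /=; rewrite (hS n (ltn_ord n) x Sx).
Qed.

Lemma int_abs_ge_steps (D : set T) (f : T -> R) (m : nat) (v : nat -> R)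
    (S : nat -> set T) :
  (forall n, measurable (S n)) -> trivIset `I_m S -> set_inj `I_m v ->
  (forall n, 0 <= v n)%R -> (forall n, (n < m)%N -> S n `<=` D) ->
  (forall n, (n < m)%N -> forall x, S n x -> (v n <= `|f x|)%R) ->
  \sum_(n < m) (v n)%:E * leb (S n) <= int_abs D f.
Proof.
move=> mS Sdisj vinj v0 SD vf.
pose h := sum_nnsfun (fun n => scale_nnsfun (indic_nnsfun R (mS n)) (v0 n)) m.
have hE x : h x = (\sum_(n < m) v n * \1_(S n) x)%R.
  by rewrite sum_nnsfunE; apply: eq_bigr => n _ /=; rewrite mindicE.
have hS n : (n < m)%N -> forall x, S n x -> h x = v n.
  move=> nm x Snx; rewrite hE (bigD1 (Ordinal nm)) //= indicE mem_set // mulr1.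
  rewrite big1 ?addr0 // => j jn; rewrite indicE memNset ?mulr0 // => Sjx.
  by move/eqP: jn; apply; apply/val_inj/Sdisj => //=; exists x.
have h0 x : (forall n, (n < m)%N -> ~ S n x) -> h x = 0%R.
  by move=> NS; rewrite hE big1 // => n _; rewrite indicE memNset ?mulr0 //; exact: NS.
apply: (le_trans (le_sintegral_steps vinj v0 hS)).
apply: sintegral_le_int_abs => x.
  move=> Dx; have [[n nm Snx]|NS] := pselect (exists2 n, (n < m)%N & S n x).
    by rewrite (hS n nm x Snx); exact: vf.
  by rewrite h0 // => n nm Snx; apply: NS; exists n.
by move=> NDx; rewrite h0 // => n nm /(SD n nm).
Qed.

End integral_lower_bounds.

Section superlevel_boxes.
Context {R : realType} {d : nat}.
Local Notation T := (Rd R d).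

Definition superlevel_box (g : T -> R) (k : nat) : set T :=
  cube (const_mx (- k.+1%:R)) (2 * k.+1%:R) `&` [set x | (k.+1%:R)^-1 <= `|g x|].

Lemma measurable_superlevel_box (g : T -> R) k : measurable_fun setT g ->
  measurable (superlevel_box g k).
Proof.
move=> mg; apply: measurableI; first exact: measurable_cube.
have mng := measurableT_comp (@normr_measurable R setT) mg.
have := mng measurableT `[(k.+1%:R)^-1, +oo[%classic (measurable_itv _).
by rewrite setTI; congr measurable; apply/seteqP; split => x /=; rewrite in_itv /= andbT.
Qed.

Lemma in_superlevel_box (g : T -> R) (x : T) : g x != 0 ->
  exists k, superlevel_box g k x.
Proof.
move=> gx0; set s := \sum_i `|(x : 'rV[R]_d) ord0 i| + `|g x|^-1.
exists (Num.trunc s); have := truncnS_gt s; set K := (Num.trunc s).+1%:R => sK.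
have gx_gt0 : 0 < `|g x| by rewrite normr_gt0.
split => [i|/=]; last first.
  rewrite -(invrK `|g x|) lef_pV2 ?posrE ?invr_gt0// ltW// (le_lt_trans _ sK)//.
  by rewrite lerDr sumr_ge0.
have xi : `|(x : 'rV[R]_d) ord0 i| < K.
  apply: le_lt_trans sK; rewrite /s (bigD1 i) //= -addrA lerDl.
  by rewrite addr_ge0 ?invr_ge0 ?sumr_ge0.
by move: xi; rewrite ltr_norml !mxE => /andP[h1 h2]; apply/andP; split; lra.
Qed.

Lemma leb_superlevel_box_gt0 (g : T -> R) : measurable_fun setT g ->
  ~ ae_zero g -> exists k, (0 < leb (superlevel_box g k))%E.
Proof.
move=> mg gnz; apply: contrapT => Hn; apply: gnz.
have E0 k : leb (superlevel_box g k) = 0%E.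
  by apply/eqP; rewrite eq_le leb_ge0 andbT leNgt; apply/negP => H; apply: Hn; exists k.
exists (\bigcup_k superlevel_box g k); split.
  by apply: bigcupT_measurable => k; exact: measurable_superlevel_box.
split; last by move=> x /= /eqP /in_superlevel_box[k Hk]; exists k.
apply/eqP; rewrite eq_le leb_ge0 andbT.
by apply: (le_trans (leb_sigma_subadditive _)); rewrite eseries0.
Qed.

Lemma exists_cube_int_abs_ge (g : T -> R) :
  leb (set0 : set T) = 0%E -> measurable_fun setT g -> ~ ae_zero g ->
  exists (a : 'rV[R]_d) (l q c : R), [/\ 0 < l, 0 < q, 0 < c,
    (q%:E <= leb (cube a l : set T))%E &
    forall D, cube a l `<=` D -> (c%:E <= int_abs D g)%E].
Proof.
move=> leb_set0 mg gnz; have [k Ek] := leb_superlevel_box_gt0 mg gnz.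
have [q q_gt0 q_le] := ereal_gt0_ge_fin Ek.
pose eps : R := k.+1%:R^-1.
have eps_gt0 : 0 < eps by rewrite invr_gt0 ltr0Sn.
exists (const_mx (- k.+1%:R)), (2 * k.+1%:R), q, (eps * q); split => //.
- exact: mulr_gt0.
- by apply: (le_trans q_le); apply: le_leb => x [].
move=> D boxD; apply: le_trans (int_abs_ge_steps leb_set0 (m := 1) (v := fun=> eps)
  (S := fun=> superlevel_box g k) (D := D) _ _ _ _ _ _).
- by rewrite big_ord1 EFinM lee_wpmul2l // lee_fin ltW.
- by move=> _; exact: measurable_superlevel_box.
- by move=> i j; rewrite /= !ltnS !leqn0 => /eqP -> /eqP ->.
- by move=> i j; rewrite !inE /= !ltnS !leqn0 => /eqP -> /eqP ->.
- by move=> _; exact: ltW.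
- by move=> _ _ x [/boxD].
- by move=> _ _ x [].
Qed.

End superlevel_boxes.

Section far_cubes.
Context {R : realType} {d : nat}.
Local Notation T := (Rd R d).
Variables (a : 'rV[R]_d) (l : R) (i0 : 'I_d).
Hypothesis l_gt0 : 0 < l.

Definition far_side (n : nat) : R := 2 ^+ n * l.

Definition far_cube (n : nat) : set T :=
  cube (a + \row_j (if j == i0 then 3 * far_side n else 0)) (far_side n).

Lemma far_side_gt0 n : 0 < far_side n.
Proof. by rewrite mulr_gt0 ?exprn_gt0. Qed.

Lemma far_side_lt n m : (n < m)%N -> 2 * far_side n <= far_side m.
Proof.
move=> nm; rewrite /far_side mulrA -exprS ler_pM2r //.
by rewrite ler_eXn2l // ltr1n.
Qed.

Lemma far_cube_sub n : far_cube n `<=` cube a (4 * far_side n).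
Proof.
move=> x Hx i; have := far_side_gt0 n; move/andP: (Hx i); rewrite !mxE.
by case: ifPn => _ [h1 h2] s0; apply/andP; split; lra.
Qed.

Lemma cube_sub_far n : cube a l `<=` cube a (4 * far_side n).
Proof.
apply: cube_sub; rewrite /far_side mulrA ler_peMl ?ltW //.
have : 1 <= 2 ^+ n :> R by rewrite exprn_ege1 // ler1n.
lra.
Qed.

Lemma far_cube_trivIset : trivIset setT far_cube.
Proof.
apply: ltn_trivIset => n m mn; apply/seteqP; split => // x [Hm Hn].
have := far_side_lt mn; have := far_side_gt0 m.
move/andP: (Hm i0) => [_]; move/andP: (Hn i0) => [+ _]; rewrite !mxE eqxx.
lra.
Qed.

Lemma leb_far_cube n :
  (((2 ^+ n) ^+ d)%:E * leb (cube a l : set T) <= leb (far_cube n))%E.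
Proof.
pose shift := \row_j (if j == i0 then 3 * far_side n else 0) : 'rV[R]_d.
have t0 : 0 < 2 ^+ n :> R by rewrite exprn_gt0.
apply: (leb_homothety_le (b := a + shift - 2 ^+ n *: a) t0) => x Hx i.
have /andP[h1 h2] := Hx i; rewrite !mxE.
have := ler_wpM2l (ltW t0) h1; have := ler_wpM2l (ltW t0) h2.
rewrite /far_side mulrDr.
by case: ifPn => _; move: (2 ^+ n) => t ? ?; apply/andP; split; lra.
Qed.

End far_cubes.

Section maximal_function_lower_bound.
Context {R : realType} {d : nat}.
Local Notation T := (Rd R d).
Local Open Scope ereal_scope.

Lemma HLmax_ge_average (g : T -> R) (a : 'rV[R]_d) (l : R) (x : T) :
  (0 < l)%R -> cube a l x -> ((l ^+ d)^-1)%:E * int_abs (cube a l) g <= HLmax g x.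
Proof. by move=> l0 ax; apply: ereal_sup_ubound; exists a, l. Qed.

Section far_levels.
Variables (g : T -> R) (a : 'rV[R]_d) (l q c : R) (i0 : 'I_d).
Hypotheses (d_gt0 : (0 < d)%N) (l_gt0 : (0 < l)%R) (c_gt0 : (0 < c)%R).
Hypothesis q_le : q%:E <= leb (cube a l : set T).
Hypothesis c_le : forall D, cube a l `<=` D -> c%:E <= int_abs D g.

Definition far_level (n : nat) : R := (c / (4 * far_side l n) ^+ d)%R.

Lemma far_level_gt0 n : (0 < far_level n)%R.
Proof. by rewrite divr_gt0 ?exprn_gt0 ?mulr_gt0 ?far_side_gt0. Qed.

Lemma HLmax_ge_far_level n x : far_cube a l i0 n x -> (far_level n)%:E <= HLmax g x.
Proof.
move=> x_far; have s0 : (0 < 4 * far_side l n)%R by rewrite mulr_gt0 ?far_side_gt0.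
apply: le_trans (HLmax_ge_average g s0 (far_cube_sub l_gt0 x_far)).
rewrite /far_level mulrC EFinM lee_wpmul2l ?lee_fin ?invr_ge0 ?exprn_ge0 ?(ltW s0)//.
exact/c_le/cube_sub_far.
Qed.

Lemma far_level_mass n :
  (c / (4 * l) ^+ d * q)%:E <= (far_level n)%:E * leb (far_cube a l i0 n).
Proof.
have t0 : (0 < (2 ^+ n) ^+ d :> R)%R by rewrite !exprn_gt0.
have -> : (c / (4 * l) ^+ d = far_level n * (2 ^+ n) ^+ d)%R.
  rewrite /far_level /far_side [in RHS]mulrCA [in RHS]exprMn invfM mulrCA mulrAC.
  by rewrite mulVf ?mul1r // gt_eqF.
rewrite !EFinM -muleA lee_wpmul2l ?lee_fin ?(ltW (far_level_gt0 n))//.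
apply: le_trans (leb_far_cube a l i0 n).
by rewrite lee_wpmul2l ?lee_fin ?(ltW t0).
Qed.

Lemma far_level_inj : injective far_level.
Proof.
suff decr n m : (n < m)%N -> (far_level m < far_level n)%R.
  move=> n m eq_nm; case: (ltngtP n m) => // /decr; by rewrite eq_nm ltxx.
move=> nm; have sn := far_side_gt0 l_gt0 n; have sm := far_side_gt0 l_gt0 m.
have s_lt : (4 * far_side l n < 4 * far_side l m)%R.
  by have := far_side_lt l_gt0 nm; lra.
rewrite /far_level ltr_pM2l // ltf_pV2 ?posrE ?exprn_gt0 ?mulr_gt0 //.
by rewrite ltrXn2r ?mulr_ge0 ?(ltW sn) ?(ltW l_gt0) //; exact: lt0n_neq0.
Qed.

End far_levels.

End maximal_function_lower_bound.

Lemma HLmax_not_integrable (R : realType) (d : nat) (g h : Rd R d -> R) :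
  (0 < d)%N -> measurable_fun setT g -> ~ ae_zero g ->
  ae (fun x => HLmax g x = (h x)%:E) -> int_abs setT h = +oo%E.
Proof.
move=> d_gt0 mg gnz [N [mN [N0 hN]]].
have leb_set0 : leb (set0 : set (Rd R d)) = 0%E.
  by apply/eqP; rewrite eq_le leb_ge0 andbT -N0 le_leb.
have [a [l [q [c [l_gt0 q_gt0 c_gt0 q_le c_le]]]]] :=
  exists_cube_int_abs_ge leb_set0 mg gnz.
pose i0 : 'I_d := Ordinal d_gt0.
pose delta := c / (4 * l) ^+ d * q.
apply: (@natmul_le_eq_pinfty _ delta) => [|m].
  by rewrite !mulr_gt0 ?invr_gt0 ?exprn_gt0 ?mulr_gt0.
pose S n := far_cube a l i0 n `\` N.
apply: le_trans (int_abs_ge_steps leb_set0 (D := setT) (f := h) (m := m)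
  (v := far_level l c) (S := S) _ _ _ _ _ _).
- have -> : ((delta *+ m)%:E = \sum_(n < m) delta%:E)%E.
    by rewrite sumEFin sumr_const card_ord.
  by apply: lee_sum => n _; rewrite leb_setD_null //; exact: far_level_mass.
- by move=> n; apply: measurableD => //; exact: measurable_cube.
- exact/trivIset_setIr/sub_trivIset/far_cube_trivIset.
- by move=> n k _ _; exact: (far_level_inj d_gt0 l_gt0 c_gt0).
- by move=> n; exact/ltW/(far_level_gt0 l_gt0 c_gt0).
- by [].
- move=> n _ x [x_far Nx]; have Mgx : HLmax g x = (h x)%:E by apply: contrapT => /hN.
  have := HLmax_ge_far_level l_gt0 c_le x_far; rewrite Mgx lee_fin => /le_trans; apply.
  exact: ler_norm.
Qed.

Theorem proposition4p6 (R : realType) (d : nat)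
    (X : set (Rd R d -> R)) (nX : (Rd R d -> R) -> R) :
  (0 < d)%N ->
  is_QBFS X nX ->
  (exists g, kothe X g /\ ~ ae_zero g) ->
  X (fun _ => 1) ->
  ~ HLmax_bounded (kothe X) (kothe_norm X nX).
Proof.
move=> d_gt0 _ [g [[mg g_int] gnz]] X1 [C [_ M_bounded]].
have [h [[_ h_int] Mg_h _]] := M_bounded g (conj mg g_int).
have := h_int _ X1; under eq_fun do rewrite mul1r.
by rewrite (HLmax_not_integrable d_gt0 mg gnz Mg_h).
Qed.
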